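(* Let $X=(G,H,\mu,\gamma)$ be a crossed module of finite groups and $\mathbb{K}$ a field. Then $D(G,H)$ is a braided (quasitriangular) bialgebra with $R$-matrix $$R=\sum_{h\in H}(\delta_h\otimes 1)\otimes(1\otimes\gamma(h))\in D(G,H)\otimes D(G,H),$$ where in the first factor $1$ is the neutral element of $G$ and in the second factor $1=\sum_{x\in H}\delta_x$ is the unit of $\mathbb{K}[H]$.
   Context: A crossed module of finite groups is a quadruple $X=(G,H,\mu,\gamma)$ where $G,H$ are finite groups, $\mu$ is a left action of $G$ on $H$ by group automorphisms, written $g\cdot h$, and $\gamma:H\to G$ is a group homomorphism with $\gamma(g\cdot h)=g\gamma(h)g^{-1}$ and $\gamma(h)\cdot n=hnh^{-1}$ for all $g\in G$, $h,n\in H$. $D(G,H)$ is the Hopf algebra $\mathbb{K}[H]\otimes\mathbb{K}G$, where $\mathbb{K}[H]$ is the dual of $\mathbb{K}H$ with basis $\{\delta_x\}_{x\in H}$ dual to the group elements, with product $(\delta_x\otimes a)(\delta_y\otimes b)=\delta_{x,a\cdot y}\delta_x\otimes ab$, unit $(\sum_{x\in H}\delta_x)\otimes 1$, coproduct $\Delta(\delta_x\otimes a)=\sum_{h\in H}(\delta_h\otimes a)\otimes(\delta_{h^{-1}x}\otimes a)$, counit $\varepsilon(\delta_x\otimes a)=\delta_{x,1}$ and antipode $S(\delta_x\otimes a)=\delta_{a^{-1}\cdot x^{-1}}\otimes a^{-1}$. A braided bialgebra is a bialgebra $A$ with an invertible $R\in A\otimes A$ such that $\Delta^{op}(x)=R\Delta(x)R^{-1}$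 for all $x$, $(\Delta\otimes\mathrm{id})(R)=R_{13}R_{23}$ and $(\mathrm{id}\otimes\Delta)(R)=R_{13}R_{12}$. *)

From HB Require Import structures.
From mathcomp Require Import all_boot all_order all_algebra all_fingroup.
Set Implicit Arguments. Unset Strict Implicit. Unset Printing Implicit Defensive.
Import GRing.Theory.
Local Open Scope ring_scope.

(* Crossed module (G, H, mu, gamma): G = [set: gT], H = [set: hT] are the
   whole finite groups; mu g h is written act g h. *)
Definition is_crossed_module (gT hT : finGroupType)
  (act : gT -> hT -> hT) (gamma : hT -> gT) : Prop :=
  [/\ (forall h, act 1 h = h),
      (forall g1 g2 h, act (g1 * g2) h = act g1 (act g2 h)),
      (forall g h n, act g (h * n) = act g h * act g n),
      (forall h n, gamma (h * n) = gamma h * gamma n) &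
      (forall g h, gamma (act g h) = g * gamma h * g^-1)
      /\ (forall h n, act (gamma h) n = h * n * h^-1)]%g.

Section DGH.
Variables (K : fieldType) (gT hT : finGroupType).
Variables (act : gT -> hT -> hT) (gamma : hT -> gT).

(* Basis of D(G,H): pairs (x, a) standing for delta_x (x) a. *)
Definition Bas := (hT * gT)%type.
(* An element of D(G,H) is its coefficient function in that basis;
   D(G,H)^{(x)2} and D(G,H)^{(x)3} use the product bases. *)
Definition D := {ffun Bas -> K}.
Definition D2 := {ffun Bas * Bas -> K}.
Definition D3 := {ffun Bas * Bas * Bas -> K}.

(* structure constants: (delta_x (x) a)(delta_y (x) b)
   = [x = a.y] delta_x (x) ab ; coefficient at p *)
Definition cst (u v p : Bas) : K :=
  ((u.1 == act u.2 v.1) && (p.1 == u.1) && (p.2 == u.2 * v.2)%g)%:R.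

Definition mulD (f g : D) : D :=
  [ffun p => \sum_(u : Bas) \sum_(v : Bas) (f u * g v * cst u v p)%R].
Definition oneD : D := [ffun p : Bas => (p.2 == 1%g)%:R].

Definition mulD2 (f g : D2) : D2 :=
  [ffun p : Bas * Bas => \sum_(u : Bas * Bas) \sum_(v : Bas * Bas)
     (f u * g v * cst u.1 v.1 p.1 * cst u.2 v.2 p.2)%R].
Definition oneD2 : D2 := [ffun p : Bas * Bas => oneD p.1 * oneD p.2].

Definition mulD3 (f g : D3) : D3 :=
  [ffun p : Bas * Bas * Bas => \sum_(u : Bas * Bas * Bas) \sum_(v : Bas * Bas * Bas)
     (f u * g v * cst u.1.1 v.1.1 p.1.1 * cst u.1.2 v.1.2 p.1.2 * cst u.2 v.2 p.2)%R].

(* Delta(delta_x (x) a) = sum_h (delta_h (x) a) (x) (delta_{h^-1 x} (x) a) *)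
Definition Delta (f : D) : D2 :=
  [ffun q : Bas * Bas => (q.1.2 == q.2.2)%:R * f ((q.1.1 * q.2.1)%g, q.1.2)].
Definition Delta_op (f : D) : D2 := [ffun q : Bas * Bas => Delta f (q.2, q.1)].
Definition epsD (f : D) : K := \sum_(a : gT) f (1%g, a).

Definition Delta_l (t : D2) : D3 :=
  [ffun q : Bas * Bas * Bas =>
     (q.1.1.2 == q.1.2.2)%:R * t (((q.1.1.1 * q.1.2.1)%g, q.1.1.2), q.2)].
Definition Delta_r (t : D2) : D3 :=
  [ffun q : Bas * Bas * Bas =>
     (q.1.2.2 == q.2.2)%:R * t (q.1.1, ((q.1.2.1 * q.2.1)%g, q.1.2.2))].
Definition eps_l (t : D2) : D := [ffun b : Bas => \sum_(a : gT) t ((1%g, a), b)].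
Definition eps_r (t : D2) : D := [ffun b : Bas => \sum_(a : gT) t (b, (1%g, a))].

Definition leg12 (t : D2) : D3 := [ffun q : Bas * Bas * Bas => t (q.1.1, q.1.2) * oneD q.2].
Definition leg13 (t : D2) : D3 := [ffun q : Bas * Bas * Bas => t (q.1.1, q.2) * oneD q.1.2].
Definition leg23 (t : D2) : D3 := [ffun q : Bas * Bas * Bas => oneD q.1.1 * t (q.1.2, q.2)].

(* R = sum_h (delta_h (x) 1) (x) (1 (x) gamma h) *)
Definition Rmat : D2 :=
  [ffun q : Bas * Bas => (q.1.2 == 1%g)%:R * (q.2.2 == gamma q.1.1)%:R].

Definition is_bialgebra : Prop :=
  [/\ (forall f g h, mulD f (mulD g h) = mulD (mulD f g) h),
      (forall f, mulD oneD f = f /\ mulD f oneD = f),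
      (forall f, Delta_l (Delta f) = Delta_r (Delta f)),
      (forall f, eps_l (Delta f) = f /\ eps_r (Delta f) = f) &
      (forall f g, Delta (mulD f g) = mulD2 (Delta f) (Delta g)) /\ Delta oneD = oneD2
      /\ (forall f g, epsD (mulD f g) = epsD f * epsD g) /\ epsD oneD = 1].

Definition is_braided (R : D2) : Prop :=
  [/\ (exists Rinv : D2, mulD2 R Rinv = oneD2 /\ mulD2 Rinv R = oneD2 /\
         forall f, Delta_op f = mulD2 (mulD2 R (Delta f)) Rinv),
      Delta_l R = mulD3 (leg13 R) (leg23 R) &
      Delta_r R = mulD3 (leg13 R) (leg12 R)].

End DGH.

From mathcomp Require Import all_boot all_order all_algebra all_fingroup.
Set Implicit Arguments. Unset Strict Implicit. Unset Printing Implicit Defensive.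
Import GRing.Theory.
Local Open Scope ring_scope.

(* Every identity is checked coefficientwise in the basis [delta_x (x) a] of
   D(G,H) and of its tensor powers.  The basis element [delta_x (x) c] is a
   product of two basis elements in exactly |G| ways,
   [(delta_x (x) a) (delta_(a^-1.x) (x) a^-1 c)] for [a] in [G], and likewise
   factorwise in the tensor powers, so every coefficient of a product is a
   single sum over G (resp. G^2, G^3).  The delta functions in the unit, the
   counit, R and R^-1 = sum_h (delta_h (x) 1) (x) (1 (x) gamma(h)^-1) collapse
   these sums to one term.  What remains is group theory: associativity uses
   that mu is an action, multiplicativity of Delta and eps that G acts by
   automorphisms, the hexagon identity for (Delta (x) id) that gamma is a
   homomorphism, and Delta^op = R Delta R^-1 the two crossed module axioms. *)

Section Factorizations.
Variable K : pzSemiRingType.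

Lemma pair_bigE (I J : finType) (F : I * J -> K) :
  \sum_p F p = \sum_i \sum_j F (i, j).
Proof. by rewrite pair_bigA; apply: eq_bigr => -[]. Qed.

(* [c u v p] (the coefficient of [p] in the product [u v] of basis elements)
   counts the [i : I] with [(u, v) = (l p i, r p i)]: [l p] and [r p]
   parametrize the factorizations of [p]. *)
Definition factorization_law (B I : finType) (c : B -> B -> B -> K)
    (l r : B -> I -> B) :=
  forall (F : B -> B -> K) p, \sum_u \sum_v F u v * c u v p = \sum_i F (l p i) (r p i).

Lemma factorization_lawX (B1 B2 I1 I2 : finType) c1 c2
    (l1 r1 : B1 -> I1 -> B1) (l2 r2 : B2 -> I2 -> B2) :
  factorization_law c1 l1 r1 -> factorization_law c2 l2 r2 ->
  factorization_law (fun u v p => c1 u.1 v.1 p.1 * c2 u.2 v.2 p.2)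
    (fun p i => (l1 p.1 i.1, l2 p.2 i.2)) (fun p i => (r1 p.1 i.1, r2 p.2 i.2)).
Proof.
move=> law1 law2 F p /=.
under eq_bigr => u _ do under eq_bigr => v _ do rewrite mulrA.
under eq_bigr => u _ do rewrite pair_bigE.
rewrite pair_bigE /=.
under [LHS]eq_bigr => u1 _.
  rewrite exchange_big /=.
  under eq_bigr => v1 _ do rewrite law2.
  rewrite exchange_big /=.
  over.
rewrite exchange_big pair_bigE [RHS]exchange_big /=.
by apply: eq_bigr => j _; rewrite law1.
Qed.

End Factorizations.

Section CrossedModuleDouble.
Variables (K : fieldType) (gT hT : finGroupType).
Variables (act : gT -> hT -> hT) (gamma : hT -> gT).
Hypothesis act1 : forall h, act 1%g h = h.
Hypothesis actM : forall g1 g2 h, act (g1 * g2)%g h = act g1 (act g2 h).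
Hypothesis act_morphM : forall g h n, act g (h * n)%g = (act g h * act g n)%g.
Hypothesis gammaM : forall h n, gamma (h * n)%g = (gamma h * gamma n)%g.
Hypothesis gamma_act : forall g h, gamma (act g h) = (g * gamma h * g^-1)%g.
Hypothesis act_gamma : forall h n, act (gamma h) n = (h * n * h^-1)%g.

Lemma actK g : cancel (act g) (act g^-1).
Proof. by move=> h; rewrite -actM mulVg act1. Qed.

Lemma actVK g : cancel (act g^-1) (act g).
Proof. by move=> h; rewrite -actM mulgV act1. Qed.

Local Notation Bas := (Bas gT hT).

Lemma cstE (u v p : Bas) :
  cst K act u v p =
    ((u == (p.1, u.2)) && (v == (act u.2^-1 p.1, u.2^-1 * p.2)%g))%:R.
Proof.
case: u v p => [x a] [y b] [z c]; rewrite /cst /= !xpair_eqE eqxx andbT.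
congr (nat_of_bool _)%:R; apply/idP/idP.
- by case/andP=> /andP[/eqP-> /eqP->] /eqP->; rewrite actK mulKg !eqxx.
- by case/and3P=> /eqP-> /eqP-> /eqP->; rewrite actVK mulKVg !eqxx.
Qed.

Lemma cst_factorization :
  factorization_law (cst K act)
    (fun p a => (p.1, a)) (fun p a => (act a^-1 p.1, a^-1 * p.2)%g).
Proof.
move=> F p; rewrite pair_bigE (big_only1 p.1) // => [|x x_p _]; last first.
  rewrite big1 // => a _; rewrite big1 // => v _.
  by rewrite cstE xpair_eqE (negbTE x_p) mulr0.
apply: eq_bigr => a _; rewrite (big_only1 (act a^-1 p.1, a^-1 * p.2)%g) //.
  by rewrite cstE !eqxx mulr1.
by move=> v /negbTE v_p _; rewrite cstE v_p andbF mulr0.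
Qed.

Lemma mulDE (f g : D K gT hT) p :
  mulD act f g p = \sum_a f (p.1, a) * g (act a^-1 p.1, a^-1 * p.2)%g.
Proof. by rewrite ffunE cst_factorization. Qed.

Lemma mulD2E (f g : D2 K gT hT) p :
  mulD2 act f g p = \sum_a \sum_b f ((p.1.1, a), (p.2.1, b)) *
     g ((act a^-1 p.1.1, a^-1 * p.1.2), (act b^-1 p.2.1, b^-1 * p.2.2))%g.
Proof.
rewrite ffunE; under eq_bigr do under eq_bigr do rewrite -mulrA.
by rewrite (factorization_lawX cst_factorization cst_factorization) pair_bigE.
Qed.

Lemma mulD3E (f g : D3 K gT hT) p :
  mulD3 act f g p = \sum_a \sum_b \sum_c f ((p.1.1.1, a), (p.1.2.1, b), (p.2.1, c)) *
     g ((act a^-1 p.1.1.1, a^-1 * p.1.1.2), (act b^-1 p.1.2.1, b^-1 * p.1.2.2),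
        (act c^-1 p.2.1, c^-1 * p.2.2))%g.
Proof.
rewrite ffunE; under eq_bigr do under eq_bigr do
  rewrite -!mulrA [cst _ _ _ _ _ * (cst _ _ _ _ _ * _)]mulrA mulrA.
rewrite (factorization_lawX (factorization_lawX cst_factorization cst_factorization)
           cst_factorization).
by rewrite !pair_bigE.
Qed.

Lemma mulDA (f g h : D K gT hT) :
  mulD act f (mulD act g h) = mulD act (mulD act f g) h.
Proof.
apply/ffunP => p; rewrite !mulDE.
under [RHS]eq_bigr => c _ do rewrite mulDE big_distrl.
rewrite exchange_big /=; apply: eq_bigr => a _.
rewrite mulDE big_distrr /= [RHS](reindex_inj (mulgI a)) /=.
by apply: eq_bigr => b _; rewrite mulKg invMg actM !mulgA mulrA.
Qed.

Lemma mul1D (f : D K gT hT) : mulD act (oneD K gT hT) f = f.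
Proof.
apply/ffunP => p; rewrite mulDE (big_only1 1%g) // => [|a /negbTE a1 _].
  by rewrite ffunE eqxx mul1r invg1 act1 mul1g; case: p.
by rewrite ffunE a1 mul0r.
Qed.

Lemma mulD1 (f : D K gT hT) : mulD act f (oneD K gT hT) = f.
Proof.
apply/ffunP => p; rewrite mulDE (big_only1 p.2) // => [|a ap _].
  by rewrite ffunE mulVg eqxx mulr1; case: p.
by rewrite ffunE /= -eq_mulVg1 (negbTE ap) mulr0.
Qed.

Lemma Delta_coassoc (f : D K gT hT) : Delta_l (Delta f) = Delta_r (Delta f).
Proof.
apply/ffunP => q; rewrite !ffunE /= mulgA.
by case: (eqVneq q.1.1.2 q.1.2.2) => [->|_]; rewrite ?mul1r ?mul0r ?mulr0.
Qed.

Lemma eps_lDelta (f : D K gT hT) : eps_l (Delta f) = f.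
Proof.
apply/ffunP => b; rewrite ffunE (big_only1 b.2) // => [|a /negbTE ab _].
  by rewrite ffunE eqxx mul1r mul1g; case: b.
by rewrite ffunE /= ab mul0r.
Qed.

Lemma eps_rDelta (f : D K gT hT) : eps_r (Delta f) = f.
Proof.
apply/ffunP => b; rewrite ffunE (big_only1 b.2) // => [|a ab _].
  by rewrite ffunE eqxx mul1r mulg1; case: b.
by rewrite ffunE /= eq_sym (negbTE ab) mul0r.
Qed.

Lemma epsD1 : epsD (oneD K gT hT) = 1.
Proof.
rewrite /epsD (big_only1 1%g) // => [|a /negbTE a1 _]; first by rewrite ffunE eqxx.
by rewrite ffunE a1.
Qed.

Lemma Delta1 : Delta (oneD K gT hT) = oneD2 K gT hT.
Proof.
apply/ffunP => q; rewrite !ffunE /= -!natrM !mulnb.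
by case: (eqVneq q.1.2 1%g) => [->|_]; rewrite ?andbF // andbT eq_sym.
Qed.

Lemma actg1 g : act g 1%g = 1%g.
Proof. by apply: (mulgI (act g 1%g)); rewrite -act_morphM !mulg1. Qed.

Lemma epsDM (f g : D K gT hT) : epsD (mulD act f g) = epsD f * epsD g.
Proof.
rewrite /epsD big_distrl; under [LHS]eq_bigr do rewrite mulDE /=.
rewrite exchange_big /=; apply: eq_bigr => a _.
rewrite big_distrr /= (reindex_inj (mulgI a)) /=.
by apply: eq_bigr => c _; rewrite mulKg actg1.
Qed.

Lemma DeltaM (f g : D K gT hT) :
  Delta (mulD act f g) = mulD2 act (Delta f) (Delta g).
Proof.
apply/ffunP => q; rewrite mulD2E ffunE mulDE big_distrr /=.
apply: eq_bigr => a _; rewrite (big_only1 a) // => [|b ba _]; last first.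
  by rewrite !ffunE /= eq_sym (negbTE ba) !mul0r.
rewrite !ffunE /= eqxx mul1r (inj_eq (mulgI _)) -act_morphM.
by case: (q.1.2 =P q.2.2) => _; rewrite ?mul1r ?mul0r ?mulr0.
Qed.

Lemma gamma1 : gamma 1%g = 1%g.
Proof. by apply: (mulgI (gamma 1%g)); rewrite -gammaM !mulg1. Qed.

Lemma gammaV h : gamma h^-1 = (gamma h)^-1%g.
Proof. by apply: (mulgI (gamma h)); rewrite -gammaM !mulgV gamma1. Qed.

Lemma act_gammaV h n : act (gamma h)^-1 n = (h^-1 * n * h)%g.
Proof. by rewrite -gammaV act_gamma invgK. Qed.

Local Notation R := (Rmat K gamma).
Local Notation Rinv := (Rmat K (fun h => (gamma h)^-1)%g).

Lemma mulRmatE (phi : hT -> gT) (t : D2 K gT hT) p :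
  mulD2 act (Rmat K phi) t p =
    t (p.1, (act (phi p.1.1)^-1 p.2.1, (phi p.1.1)^-1 * p.2.2)%g).
Proof.
rewrite mulD2E (big_only1 1%g) // => [|a /negbTE a1 _]; last first.
  by rewrite big1 // => b _; rewrite ffunE /= a1 !mul0r.
rewrite (big_only1 (phi p.1.1)) // => [|b /negbTE bphi _]; last first.
  by rewrite ffunE /= bphi mulr0 mul0r.
by rewrite ffunE /= !eqxx !mul1r invg1 act1 mul1g; case: p => -[].
Qed.

Lemma mulD2_Rmat_invE (t : D2 K gT hT) p :
  mulD2 act t Rinv p =
    t (p.1, (p.2.1, p.2.2 * gamma (act p.1.2^-1 p.1.1))%g).
Proof.
rewrite mulD2E (big_only1 p.1.2) // => [|a ap _]; last first.
  by rewrite big1 // => b _; rewrite ffunE /= -eq_mulVg1 (negbTE ap) mul0r mulr0.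
rewrite (big_only1 (p.2.2 * gamma (act p.1.2^-1 p.1.1))%g) // => [|b bp _].
  by rewrite ffunE /= mulVg invMg mulgKV !eqxx !mulr1; case: p => -[].
rewrite ffunE /= mulVg eqxx -(inj_eq invg_inj) invMg !invgK.
by rewrite (can2_eq (mulKVg _) (mulKg _)) (negbTE bp) !mulr0.
Qed.

Lemma mulRmatV : mulD2 act R Rinv = oneD2 K gT hT.
Proof.
apply/ffunP => p; rewrite mulRmatE !ffunE /=.
by rewrite (can2_eq (mulKVg _) (mulKg _)) mulgV.
Qed.

Lemma mulVRmat : mulD2 act Rinv R = oneD2 K gT hT.
Proof.
apply/ffunP => p; rewrite mulRmatE !ffunE /= invgK.
by rewrite (can2_eq (mulKg _) (mulKVg _)) mulVg.
Qed.

Lemma Delta_opE (f : D K gT hT) :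
  Delta_op f = mulD2 act (mulD2 act R (Delta f)) Rinv.
Proof.
apply/ffunP => p; rewrite mulD2_Rmat_invE mulRmatE !ffunE /= act_gammaV !mulgA mulgV mul1g.
have conj_twist (a b y : gT) : (a == y^-1 * b * (a^-1 * y * a))%g = (b == a).
  rewrite !mulgA -{1}[a]mul1g (inj_eq (mulIg a)) eq_sym -!mulgA [(b * _)%g]mulgA -conjgE.
  by rewrite conjg_eq1 -eq_mulgV1.
rewrite gamma_act invgK conj_twist.
by case: (eqVneq p.2.2 p.1.2) => [->|_]; rewrite ?mul0r.
Qed.

Lemma mul_leg13RmatE (phi : hT -> gT) (t : D3 K gT hT) q :
  mulD3 act (leg13 (Rmat K phi)) t q =
    t (q.1, (act (phi q.1.1.1)^-1 q.2.1, (phi q.1.1.1)^-1 * q.2.2)%g).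
Proof.
rewrite mulD3E (big_only1 1%g) // => [|a /negbTE a1 _]; last first.
  by rewrite big1 // => b _; rewrite big1 // => c _; rewrite !ffunE /= a1 !mul0r.
rewrite (big_only1 1%g) // => [|b /negbTE b1 _]; last first.
  by rewrite big1 // => c _; rewrite !ffunE /= b1 !mulr0 !mul0r.
rewrite (big_only1 (phi q.1.1.1)) // => [|c /negbTE cphi _]; last first.
  by rewrite !ffunE /= cphi !mulr0 !mul0r.
by rewrite !ffunE /= !eqxx !mul1r !invg1 !act1 !mul1g; case: q => [[[? ?] [? ?]] ?].
Qed.

Lemma Delta_lRmat : Delta_l R = mulD3 act (leg13 R) (leg23 R).
Proof.
apply/ffunP => q; rewrite mul_leg13RmatE !ffunE /= gammaM.
rewrite (can2_eq (mulKVg _) (mulKg _)) -!natrM !mulnb.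
by case: (eqVneq q.1.1.2 1%g) => [->|_]; rewrite ?andbF // eq_sym.
Qed.

Lemma Delta_rRmat : Delta_r R = mulD3 act (leg13 R) (leg12 R).
Proof.
apply/ffunP => q; rewrite mul_leg13RmatE !ffunE /= -eq_mulVg1 -!natrM !mulnb.
by case: (eqVneq q.1.2.2 (gamma q.1.1.1)) => [->|_]; rewrite ?andbF // !andbT andbC.
Qed.

End CrossedModuleDouble.

Theorem mainTheorem3 (K : fieldType) (gT hT : finGroupType)
  (act : gT -> hT -> hT) (gamma : hT -> gT) :
  is_crossed_module act gamma ->
  @is_bialgebra K gT hT act /\ @is_braided K gT hT act (@Rmat K gT hT gamma).
Proof.
case=> act1 actM act_morphM gammaM [gamma_act act_gamma].
split; split.
- exact: mulDA.
- by move=> f; split; [apply: mul1D | apply: mulD1].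
- exact: Delta_coassoc.
- by move=> f; split; [apply: eps_lDelta | apply: eps_rDelta].
- by do !split; [apply: DeltaM | apply: Delta1 | apply: epsDM | apply: epsD1].
- exists (Rmat K (fun h => (gamma h)^-1)%g); do !split.
  + exact: mulRmatV.
  + exact: mulVRmat.
  + exact: Delta_opE.
- exact: Delta_lRmat.
- exact: Delta_rRmat.
Qed.
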